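(* Let $\varepsilon\in(0,\tfrac12)$. Let $G$ and $H$ be bipartite graphs, both with vertex classes $Z$ and $W$, where $|Z|=z$, $|W|=n$, and $z>\tfrac{2}{\varepsilon}$. Suppose that (1) $d_G(x)>\left(\tfrac12+\varepsilon\right)n$ for all $x\in Z$; (2) $d_G(y)>\left(\tfrac12+\tfrac{\varepsilon}{2}\right)z$ for all $y\in W$; (3) there is an $M\in\mathbb{N}$ and a $\delta\le\tfrac{\varepsilon}{10}$ such that $M\le d_H(x)\le M(1+\delta)$ for all $x\in Z$; (4) $d_H(y)=1$ for all $y\in W$. Then $H$ can be embedded into $G$, i.e. $G$ contains a subgraph isomorphic to $H$ via an isomorphism mapping $Z$ onto $Z$ and $W$ onto $W$.
   Context: All graphs are simple. $d_G(v)$ denotes the degree of vertex $v$ in graph $G$. *)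

From HB Require Import structures.
From mathcomp Require Import all_boot all_order all_algebra perm.
Set Implicit Arguments. Unset Strict Implicit. Unset Printing Implicit Defensive.

Definition bigraph (Z W : finType) := Z -> W -> bool.

Definition degZ (Z W : finType) (B : bigraph Z W) (x : Z) : nat := #|[set y | B x y]|.
Definition degW (Z W : finType) (B : bigraph Z W) (y : W) : nat := #|[set x | B x y]|.

Definition embeds (Z W : finType) (H G : bigraph Z W) : Prop :=
  exists (f : {perm Z}) (g : {perm W}), forall x y, H x y -> G (f x) (g y).

From HB Require Import structures.
From mathcomp Require Import all_boot all_order all_algebra perm.
From mathcomp Require Import zify lra.
Import Order.TTheory GRing.Theory Num.Theory.

(* Every y in W has a unique H-neighbour pi y, so it suffices to find an
   injection g : W -> W with G (pi y) (g y) for all y, i.e. a W-perfect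
   matching in the bipartite graph y ~ w iff G (pi y) w; we get it from Hall's
   theorem.  For B in W with owner set A = pi(B): if |A| <= z/2, then
   |B| <= |A| M (1 + delta) <= (n/2)(1 + eps/10) < d_G(x) <= |N(B)| for x in A,
   since z M <= n; otherwise every w has more than z/2 G-neighbours, so it
   meets A and N(B) = W. *)

Set Implicit Arguments.
Unset Strict Implicit.
Unset Printing Implicit Defensive.

Section Hall.
Variables (L R : finType) (r : L -> R -> bool).

Definition nbhd (B : {set L}) : {set R} := [set y | [exists x in B, r x y]].

Definition hall_cond (A : {set L}) (S : {set R}) : Prop :=
  forall B : {set L}, B \subset A -> #|B| <= #|nbhd B :&: S|.

Definition matching (A : {set L}) (S : {set R}) (g : L -> R) : Prop :=
  {in A, forall x, r x (g x) && (g x \in S)} /\ {in A &, injective g}.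

Lemma nbhdU (B C : {set L}) : nbhd (B :|: C) = nbhd B :|: nbhd C.
Proof.
apply/setP => y; rewrite !inE; apply/existsP/orP.
  by case=> x /andP[]; rewrite inE => /orP[] xBC rxy; [left | right];
    apply/existsP; exists x; rewrite xBC.
by case=> /existsP[x /andP[xBC rxy]]; exists x; rewrite inE xBC ?orbT.
Qed.

Lemma mem_nbhd (B : {set L}) x y : x \in B -> r x y -> y \in nbhd B.
Proof. by move=> xB rxy; rewrite inE; apply/existsP; exists x; rewrite xB. Qed.

Lemma hall_condS (A B : {set L}) (S : {set R}) :
  B \subset A -> hall_cond A S -> hall_cond B S.
Proof. by move=> sBA hA C sCB; apply/hA/(subset_trans sCB). Qed.

Lemma hall_cond_tight (A B : {set L}) (S : {set R}) :
  B \subset A -> #|nbhd B :&: S| <= #|B| ->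
  hall_cond A S -> hall_cond (A :\: B) (S :\: nbhd B).
Proof.
move=> sBA tightB hA C sC.
have CB0 : C :&: B = set0.
  apply/setP => x; rewrite !inE; apply/negbTE; apply/andP => -[xC xB].
  by have := subsetP sC x xC; rewrite inE xB.
have := hA (C :|: B); rewrite subUset sBA (subset_trans sC (subsetDl A B)).
move=> /(_ isT); rewrite nbhdU.
have split_nbhd : (nbhd C :|: nbhd B) :&: S
    \subset (nbhd C :&: (S :\: nbhd B)) :|: (nbhd B :&: S).
  apply/subsetP => y; rewrite !(in_setU, in_setI, in_setD).
  by case: (y \in nbhd B); rewrite ?andbF ?orbF ?andbT ?orbT.
have := subset_leq_card split_nbhd; have := cardsUI C B.
have := cardsUI (nbhd C :&: (S :\: nbhd B)) (nbhd B :&: S).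
rewrite CB0 cards0; lia.
Qed.

Lemma hall_cond_loose (A : {set L}) (S : {set R}) (a : L) (b : R) :
  (forall C : {set L}, C \subset A :\ a -> C != set0 ->
     #|C| < #|nbhd C :&: S|) ->
  hall_cond (A :\ a) (S :\ b).
Proof.
move=> loose C sC; have [->|C0] := eqVneq C set0; first by rewrite cards0.
have drop_b : nbhd C :&: S \subset (nbhd C :&: (S :\ b)) :|: [set b].
  apply/subsetP => y; rewrite !(in_setU, in_setI, in_setD1, in_set1).
  by case: (y == b); rewrite ?orbT ?orbF.
have := loose C sC C0; have := subset_leq_card drop_b.
have := cardsUI (nbhd C :&: (S :\ b)) [set b]; rewrite cards1; lia.
Qed.

Lemma matching0 (S : {set R}) (d : L -> R) : matching set0 S d.
Proof. by split=> [x|x y]; rewrite inE. Qed.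

Lemma matching_glue (A B : {set L}) (S : {set R}) g1 g2 : B \subset A ->
  matching B S g1 -> matching (A :\: B) (S :\: nbhd B) g2 ->
  matching A S (fun x => if x \in B then g1 x else g2 x).
Proof.
move=> sBA [rg1 ig1] [rg2 ig2].
have g2_out x : x \in A -> x \notin B ->
    [&& g2 x \notin nbhd B, r x (g2 x) & g2 x \in S].
  move=> xA xB; have := rg2 x; rewrite in_setD xB xA => /(_ isT).
  by rewrite in_setD => /and3P[-> -> ->].
have g1_in x : x \in B -> g1 x \in nbhd B.
  by move=> xB; have /andP[rx _] := rg1 x xB; exact: mem_nbhd rx.
split=> [x xA | x y xA yA] /=.
  case: ifP => [/rg1 // | /negbT xB].
  by case/and3P: (g2_out x xA xB) => _ -> ->.
case: ifP => xB; case: ifP => yB.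
- exact: ig1.
- by move=> e; case/and3P: (g2_out y yA (negbT yB)); rewrite -e g1_in.
- by move=> e; case/and3P: (g2_out x xA (negbT xB)); rewrite e g1_in.
- by apply: ig2; rewrite inE ?xB ?yB ?xA ?yA.
Qed.

Lemma matching_add (A : {set L}) (S : {set R}) a b g :
  a \in A -> r a b -> b \in S -> matching (A :\ a) (S :\ b) g ->
  matching A S (fun x => if x == a then b else g x).
Proof.
move=> aA rab bS [rg ig].
have g_old x : x \in A -> x != a -> [&& g x != b, g x \in S & r x (g x)].
  move=> xA xa; have := rg x; rewrite !inE xA xa => /(_ isT).
  by case/and3P=> -> -> ->.
split=> [x xA | x y xA yA] /=.
  case: ifP => [/eqP-> | /negbT xa]; first by rewrite rab bS.
  by case/and3P: (g_old x xA xa) => _ -> ->.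
case: ifP => [/eqP-> | /negbT xa]; case: ifP => [/eqP-> | /negbT ya] //.
- by move=> e; case/and3P: (g_old y yA ya); rewrite -e eqxx.
- by move=> e; case/and3P: (g_old x xA xa); rewrite e eqxx.
- by apply: ig; rewrite !inE ?xa ?ya ?xA ?yA.
Qed.

(* Either some nonempty B in A :\ a is critical, and B and A :\: B are matched
   separately, or every such B has a surplus, and a takes any neighbour. *)
Lemma hall_matching (d : L -> R) (A : {set L}) (S : {set R}) :
  hall_cond A S -> exists g, matching A S g.
Proof.
have [n] := ubnP #|A|; elim: n A S => // n IH A S /ltnSE leAn hA.
have [-> | [a aA]] := set_0Vmem A; first by exists d; exact: matching0.
have ltA'n : #|A :\ a| < n by move: leAn; rewrite (cardsD1 a A) aA.
case: (boolP [exists B : {set L},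
    [&& B \subset A :\ a, B != set0 & #|nbhd B :&: S| <= #|B|]]).
  case/existsP => B /and3P[sBA' B0 tightB].
  have sBA : B \subset A := subset_trans sBA' (subD1set A a).
  have [g1 mg1] := IH B S (leq_ltn_trans (subset_leq_card sBA') ltA'n)
    (hall_condS sBA hA).
  have ltAB : #|A :\: B| < n.
    by move: B0 leAn; rewrite -card_gt0 cardsD (setIidPr sBA); lia.
  have [g2 mg2] := IH _ _ ltAB (hall_cond_tight sBA tightB hA).
  by eexists; exact: matching_glue mg1 mg2.
move/existsPn => loose.
have := hA [set a]; rewrite sub1set aA cards1 card_gt0 => /(_ isT) /set0Pn[b].
rewrite !inE => /andP[/existsP[_ /andP[/set1P-> rab]] bS].
have hA' : hall_cond (A :\ a) (S :\ b).
  apply: (@hall_cond_loose A S a b) => C sC C0.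
  by have := loose C; rewrite sC C0 /= -ltnNge.
have [g mg] := IH _ _ ltA'n hA'.
by eexists; exact: matching_add aA rab bS mg.
Qed.

Theorem hall : (forall B : {set L}, #|B| <= #|nbhd B|) ->
  exists g : L -> R, (forall x, r x (g x)) /\ injective g.
Proof.
move=> hH.
have ex_r x : exists y, r x y.
  have := hH [set x]; rewrite cards1 card_gt0 => /set0Pn[y].
  by rewrite inE => /existsP[_ /andP[/set1P-> rxy]]; exists y.
have [|g [rg ig]] := hall_matching (fun x => xchoose (ex_r x))
  (A := setT) (S := setT); first by move=> B _; rewrite setIT.
exists g; split=> [x | x y]; first by case/andP: (rg x (in_setT x)).
by apply: ig; rewrite in_setT.
Qed.

End Hall.

Lemma card_lt_setI_neq0 (T : finType) (X Y : {set T}) :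
  #|T| < #|X| + #|Y| -> X :&: Y != set0.
Proof.
move=> lt; rewrite -card_gt0 -(ltn_add2l #|X :|: Y|) addn0 cardsUI.
exact: leq_ltn_trans (max_card _) lt.
Qed.

Lemma degW_eq1_graph (Z W : finType) (H : bigraph Z W) :
  (forall y, degW H y = 1) ->
  exists pi : W -> Z, forall x y, H x y = (pi y == x).
Proof.
move=> degW_H.
have single y : exists x0, [set x | H x y] = [set x0].
  by apply/cards1P; rewrite [#|_|]degW_H.
have [pi Hpi] := fin_all_exists single.
exists pi => x y; move: (Hpi y) => /setP/(_ x).
by rewrite !inE => ->; rewrite eq_sym.
Qed.

Section Fibres.
Variables (Z W : finType) (pi : W -> Z).

Lemma sum_card_fibres : \sum_x #|[set y | pi y == x]| = #|W|.
Proof.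
rewrite -sum1_card (partition_big pi xpredT) //=.
by apply: eq_bigr => x _; rewrite sum1dep_card.
Qed.

Lemma card_le_sum_fibres (B : {set W}) :
  #|B| <= \sum_(x in pi @: B) #|[set y | pi y == x]|.
Proof.
rewrite -sum1_card (partition_big_imset pi); apply: leq_sum => x _.
rewrite sum1dep_card; apply: subset_leq_card; apply/subsetP => y.
by rewrite !inE => /andP[].
Qed.

End Fibres.

Local Open Scope ring_scope.

Lemma half_load_le (R : realFieldType) (eps a z m n : R) :
  0 < eps -> 0 <= m -> 0 <= n -> 2 * a <= z -> z * m <= n ->
  a * (m * (1 + eps / 10)) <= (1 / 2 + eps) * n.
Proof.
move=> eps_gt0 m_ge0 n_ge0 le_az le_zmn.
have k_ge0 : 0 <= 1 + eps / 10 by lra.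
have := ler_wpM2r (mulr_ge0 m_ge0 k_ge0) le_az.
have := ler_wpM2r k_ge0 le_zmn; have := mulr_ge0 (ltW eps_gt0) n_ge0; nra.
Qed.

Section HallConditionForFibres.
Variables (R : realFieldType) (Z W : finType) (G : bigraph Z W) (pi : W -> Z).
Variables (eps : R) (M : nat).
Hypothesis eps_gt0 : 0 < eps.
Hypothesis degZ_G : forall x, (1 / 2 + eps) * #|W|%:R < (degZ G x)%:R.
Hypothesis degW_G : forall y, (#|Z| < 2 * degW G y)%N.
Hypothesis fibre_ge : forall x, (M <= #|[set y | pi y == x]|)%N.
Hypothesis fibre_le :
  forall x, #|[set y | pi y == x]|%:R <= M%:R * (1 + eps / 10).

Lemma sum_fibres_small (A : {set Z}) : (2 * #|A| <= #|Z|)%N ->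
  (\sum_(x in A) #|[set y | pi y == x]|)%:R <= (1 / 2 + eps) * #|W|%:R.
Proof.
move=> small; apply: le_trans (_ : #|A|%:R * (M%:R * (1 + eps / 10)) <= _).
  rewrite natr_sum mulr_natl -sumr_const.
  by apply: ler_sum => x _; exact: fibre_le.
apply: (half_load_le (z := #|Z|%:R)); rewrite ?ler0n -?natrM ?ler_nat //.
by rewrite -(sum_card_fibres pi) -sum_nat_const; apply: leq_sum.
Qed.

Lemma nbhd_fibres_large (B : {set W}) : (#|Z| < 2 * #|pi @: B|)%N ->
  nbhd (G \o pi) B = setT.
Proof.
move=> large; apply/setP => w; rewrite in_setT.
have meet : pi @: B :&: [set x | G x w] != set0.
  by apply: card_lt_setI_neq0; have := degW_G w; rewrite /degW; lia.
have /set0Pn[_ /setIP[/imsetP[y yB ->] Gw]] := meet.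
by apply: (mem_nbhd yB); rewrite inE in Gw.
Qed.

Lemma hall_cond_fibres (B : {set W}) : (#|B| <= #|nbhd (G \o pi) B|)%N.
Proof.
have [small | large] := leqP (2 * #|pi @: B|) #|Z|; last first.
  by rewrite nbhd_fibres_large // cardsT max_card.
have [-> | [y yB]] := set_0Vmem B; first by rewrite cards0.
have degZ_le : (degZ G (pi y) <= #|nbhd (G \o pi) B|)%N.
  apply/subset_leq_card/subsetP => w.
  by rewrite [w \in _]inE; exact: mem_nbhd yB.
rewrite -(ler_nat R); apply: (le_trans (y := (1 / 2 + eps) * #|W|%:R)).
  apply: le_trans (sum_fibres_small small).
  by rewrite ler_nat card_le_sum_fibres.
by apply: le_trans (ltW (degZ_G (pi y))) _; rewrite ler_nat.
Qed.

End HallConditionForFibres.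

Theorem lemma2 (R : realFieldType) (Z W : finType) (G H : bigraph Z W)
  (eps : R) (M : nat) (delta : R) :
  0 < eps -> eps < 1 / 2 ->
  2 / eps < #|Z|%:R ->
  (forall x : Z, (1 / 2 + eps) * #|W|%:R < (degZ G x)%:R) ->
  (forall y : W, (1 / 2 + eps / 2) * #|Z|%:R < (degW G y)%:R) ->
  delta <= eps / 10 ->
  (forall x : Z, (M <= degZ H x)%N /\ (degZ H x)%:R <= M%:R * (1 + delta)) ->
  (forall y : W, degW H y = 1%N) ->
  embeds H G.
Proof.
move=> eps_gt0 _ _ degZ_G degW_G delta_le degZ_H degW_H.
have [pi Hpi] := degW_eq1_graph degW_H.
have fibreE x : degZ H x = #|[set y | pi y == x]|.
  by apply: eq_card => y; rewrite !inE Hpi.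
have degW_G' y : (#|Z| < 2 * degW G y)%N.
  rewrite -(ltr_nat R) natrM.
  by have := degW_G y; have := ler0n R #|Z|; nra.
have fibre_ge x : (M <= #|[set y | pi y == x]|)%N.
  by rewrite -fibreE; case: (degZ_H x).
have fibre_le x : #|[set y | pi y == x]|%:R <= M%:R * (1 + eps / 10).
  rewrite -fibreE; case: (degZ_H x) => _ /le_trans; apply.
  by rewrite ler_wpM2l ?ler0n ?lerD2l.
have [g [Gg g_inj]] :=
  hall (hall_cond_fibres eps_gt0 degZ_G degW_G' fibre_ge fibre_le).
exists 1%g, (perm g_inj) => x y; rewrite Hpi perm1 permE => /eqP <-.
exact: Gg.
Qed.
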